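(* For every $\delta>0$ and $n\in\mathbb{N}$ there exists $N\in\mathbb{N}$ such that the following holds for every $N$-partitioned hypergraph $H$ and every choice of subsets $W_{jij'kj''}\subseteq V_{ik}$, for all $j,i,j',k,j''\in[N]$ with $j<i<j'<k<j''$, satisfying $|W_{jij'kj''}|\ge\delta|V_{ik}|$: there exist an induced $n$-partitioned subhypergraph $H'$ of $H$ with index set $I\subseteq[N]$ and vertices $w_{ik}\in V_{ik}$, for $i<k$, $i,k\in I$, such that $w_{ik}\in W_{jij'kj''}$ for all $j,j',j''\in I$ with $j<i<j'<k<j''$.
   Context: An $n$-partitioned hypergraph $H$ is a finite $3$-uniform hypergraph whose vertex set is partitioned into nonempty sets $V_{ij}$, $1\le i<j\le n$, such that every edge has, for some $1\le i<j<k\le n$, exactly one vertex in each of $V_{ij}$, $V_{ik}$, $V_{jk}$. For $I\subseteq[n]$, the induced subhypergraph with index set $I$ is the $|I|$-partitioned hypergraph with parts $V_{ij}$, $i<j$, $i,j\in I$ (indexed by elements of $I$) and all edges of $H$ contained in the union of these parts. *)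

From HB Require Import structures.
From mathcomp Require Import all_boot all_order all_algebra.
From mathcomp Require Export reals.
Set Implicit Arguments. Unset Strict Implicit. Unset Printing Implicit Defensive.

(* Indices [N] are represented by 'I_N (0-based; only the order matters).
   An N-partitioned hypergraph is given by a finite vertex type V,
   a map [part : V -> 'I_N * 'I_N] sending v to the (i,j) with v \in V_ij,
   and a set of edges E : {set {set V}}. *)

Definition Vpart (N : nat) (V : finType) (part : V -> 'I_N * 'I_N)
  (i j : 'I_N) : {set V} := [set v | part v == (i, j)].

Definition is_npartitioned (N : nat) (V : finType)
  (part : V -> 'I_N * 'I_N) (E : {set {set V}}) : Prop :=
  (forall v : V, ((part v).1 < (part v).2)%N) /\
  (forall i j : 'I_N, (i < j)%N -> exists v : V, v \in Vpart part i j) /\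
  (forall e, e \in E -> exists (i j k : 'I_N) (a b c : V),
      [/\ (i < j)%N, (j < k)%N & e = [set a; b; c]] /\
      [/\ a \in Vpart part i j, b \in Vpart part i k & c \in Vpart part j k]).

From HB Require Import structures.
From mathcomp Require Import all_boot all_order all_algebra.
From mathcomp Require Import reals.
From mathcomp Require Import zify lra.
Import Order.TTheory GRing.Theory Num.Theory.
Set Implicit Arguments. Unset Strict Implicit. Unset Printing Implicit Defensive.

(* Colour every n-subset S of the index set by the set of rank pairs (r1, r2) such that the
   r1-th and r2-th elements i < k of S are bad: no vertex of V_ik lies in all W_{j i j' k j''}
   with j, j', j'' in S.  Ramsey's theorem gives a large H all of whose n-subsets have the
   same colour c.  If (r1, r2) were in c, choose i < k in H with many elements of H below i,
   between i and k, and above k.  Averaging yields a vertex v of V_ik lying in a delta-fraction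
   of the sets W_{j i j' k j''}, and two Kovari-Sos-Turan type steps yield large sets A', B',
   C' with v in W_{j i j' k j''} for all j in A', j' in B', j'' in C'.  An n-subset of
   A' + {i} + B' + {k} + C' in which i and k have ranks r1 and r2 then makes (r1, r2) good, a
   contradiction.  Hence c is empty, and every n-subset of H carries the required w_ik. *)

Lemma exists_subset_card (T : finType) (A : {set T}) m :
  m <= #|A| -> exists2 B : {set T}, B \subset A & #|B| = m.
Proof.
case/card_geqP => s [us ss sub]; exists [set x in s].
  by apply/subsetP => x; rewrite inE; exact: sub.
by rewrite cardsE (card_uniqP us).
Qed.

Lemma sum_le_card_mul_max (T : finType) (A : {set T}) (g : T -> nat) :
  A != set0 -> exists2 a, a \in A & \sum_(x in A) g x <= #|A| * g a.
Proof.
case/set0Pn => x0 Ax0.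
have [a Aa amax] := @arg_maxnP _ x0 (mem A) g Ax0.
by exists a => //; rewrite -sum_nat_const leq_sum.
Qed.

Lemma pigeonhole_fiber (T1 T2 : finType) (A : {set T1}) (B : {set T2}) (f : T1 -> T2) :
  A != set0 -> {in A, forall x, f x \in B} ->
  exists2 c, c \in B & #|A| <= #|B| * #|[set x in A | f x == c]|.
Proof.
case/set0Pn => x0 Ax0 fAB.
have B0 : B != set0 by apply/set0Pn; exists (f x0); exact: fAB.
have [c Bc Hc] := sum_le_card_mul_max (fun c => #|[set x in A | f x == c]|) B0.
exists c => //; apply: leq_trans Hc; rewrite -sum1_card (partition_big f (mem B)) //=.
by apply: leq_sum => c' _; rewrite -sum1_card; apply: eq_leq; apply: eq_bigl => x; rewrite inE.
Qed.

Lemma ord_set_min m (S : {set 'I_m}) :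
  S != set0 -> exists2 x, x \in S & {in S, forall y : 'I_m, x <= y}.
Proof.
case/set0Pn => x0 Sx0.
by have [x Sx xmin] := @arg_minnP _ x0 (mem S) val Sx0; exists x.
Qed.

Section Ramsey.
Variable C : finType.
Implicit Types (m r : nat).

Definition homogeneous m (chi : {set 'I_m} -> C) r (H : {set 'I_m}) (c : C) :=
  forall S : {set 'I_m}, S \subset H -> #|S| = r -> chi S = c.

Definition end_homogeneous m (chi : {set 'I_m} -> C) r (X : {set 'I_m}) (col : 'I_m -> C) :=
  forall x (S : {set 'I_m}), x \in X -> S \subset X -> #|S| = r -> {in S, forall y : 'I_m, x < y} ->
    chi (x |: S) = col x.

Definition ramsey_property r := forall M, exists N,
  forall m (P : {set 'I_m}) (chi : {set 'I_m} -> C), N <= #|P| ->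
  exists (H : {set 'I_m}) (c : C), [/\ H \subset P, M <= #|H| & homogeneous chi r H c].

Definition end_ramsey_property r := forall L, exists N,
  forall m (P : {set 'I_m}) (chi : {set 'I_m} -> C), N <= #|P| ->
  exists (X : {set 'I_m}) (col : 'I_m -> C),
    [/\ X \subset P, L <= #|X| & end_homogeneous chi r X col].

Lemma ramsey_property0 : ramsey_property 0.
Proof.
move=> M; exists M => m P chi PM; exists P, (chi set0); split => // S _ /eqP.
by rewrite cards_eq0 => /eqP ->.
Qed.

(* Peel off the least element x of P and pass to a set homogeneous for S |-> chi (x |: S). *)
Lemma end_ramsey_property_of r : ramsey_property r -> end_ramsey_property r.
Proof.
move=> ramsey_r; elim => [|L [NL IHL]].
  exists 0 => m P chi _; exists set0, (fun _ => chi set0).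
  by split; rewrite ?sub0set // => x S; rewrite inE.
have [NR ramsey_NR] := ramsey_r NL.
exists NR.+1 => m P chi PNR.
have /ord_set_min [x Px xmin] : P != set0 by rewrite -card_gt0; lia.
have Px_NR : NR <= #|P :\ x| by move: PNR; rewrite (cardsD1 x P) Px; lia.
have [H [c [HPx HNL H_hom]]] := ramsey_NR m (P :\ x) (fun S => chi (x |: S)) Px_NR.
have [X [col [XH LX X_end]]] := IHL m H chi HNL.
have XP : X \subset P :\ x by apply: subset_trans HPx.
have xX : x \notin X by apply/negP => /(subsetP XP); rewrite !inE eqxx.
exists (x |: X), (fun y => if y == x then c else col y); split.
- by rewrite subUset sub1set Px (subset_trans XP) ?subsetDl.
- by rewrite cardsU1 xX; lia.
move=> y S; rewrite in_setU1 => /predU1P [-> | yX] SX Sr Sgt.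
  rewrite eqxx; apply: H_hom => //; apply/subsetP => z zS.
  have /setU1P [zx|//] := subsetP SX z zS; last exact: (subsetP XH).
  by have := Sgt z zS; rewrite zx ltnn.
have yx : y != x by apply: contraNneq xX => <-.
rewrite (negbTE yx); apply: X_end => //; apply/subsetP => z zS.
have /setU1P [zx|//] := subsetP SX z zS.
have Py : y \in P by have /setD1P [] := subsetP XP y yX.
by have := xmin y Py; have := Sgt z zS; rewrite zx; lia.
Qed.

(* An end-homogeneous set large enough contains, by pigeonhole on [col], a homogeneous set. *)
Lemma ramsey_property_succ r : ramsey_property r -> ramsey_property r.+1.
Proof.
move=> /end_ramsey_property_of end_r M.
have [N end_N] := end_r (#|C| * M).+1.
exists N => m P chi PN; have [X [col [XP LX X_end]]] := end_N m P chi PN.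
have X0 : X != set0 by rewrite -card_gt0; lia.
have [c _ fiber_big] := pigeonhole_fiber X0 (fun x _ => in_setT (col x)).
exists [set x in X | col x == c], c; split.
- by apply: subset_trans XP; apply/subsetP => x; rewrite inE => /andP [].
- by move: fiber_big LX; rewrite cardsT; nia.
move=> S SH Sr.
have /ord_set_min [y Sy ymin] : S != set0 by rewrite -card_gt0 Sr.
have /setIdP [Xy /eqP <-] := subsetP SH y Sy.
have SX : S \subset X by apply: subset_trans SH _; apply/subsetP => x /setIdP [].
rewrite -(setD1K Sy); apply: X_end => //.
- exact: subset_trans (subD1set _ _) SX.
- by move: Sr; rewrite (cardsD1 y S) Sy; lia.
move=> z /setD1P [zy Sz]; rewrite ltn_neqAle ymin // andbT.
by apply: contra zy => /eqP/val_inj ->.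
Qed.

Theorem ramsey r : ramsey_property r.
Proof. by elim: r => [|r]; [exact: ramsey_property0 | exact: ramsey_property_succ]. Qed.

End Ramsey.

Lemma card_rel_sum_fibers (T1 T2 : finType) (U : {set T2}) (Rel : {set T1 * T2}) :
  {in Rel, forall p, p.2 \in U} ->
  #|Rel| = \sum_(u in U) #|[set x | (x, u) \in Rel]|.
Proof.
move=> RelU; rewrite -sum1_card (partition_big snd (mem U)) //=.
apply: eq_bigr => u _; rewrite -sum1_card.
rewrite (reindex (pair^~ u)) /=; last first.
  by exists fst => [x _ //|[x u'] /andP [_ /eqP /= ->]].
by apply: eq_bigl => x; rewrite inE eqxx andbT.
Qed.

Lemma card_large_values (T : finType) (U : {set T}) (g : T -> nat) m K :
  0 < m -> {in U, forall u, g u <= m} -> m * #|U| <= K * \sum_(u in U) g u ->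
  #|U| <= 2 * K * #|[set u in U | m <= 2 * K * g u]|.
Proof.
move=> m_gt0 g_le dense; set U2 := [set u in U | _].
have large : \sum_(u in U | m <= 2 * K * g u) g u <= #|U2| * m.
  rewrite -sum_nat_cond_const; apply: leq_sum => u /andP [Uu _]; exact: g_le.
have small : 2 * K * \sum_(u in U | ~~ (m <= 2 * K * g u)) g u <= #|U| * m.
  apply: (@leq_trans (\sum_(u in U | ~~ (m <= 2 * K * g u)) m)).
    by rewrite big_distrr; apply: leq_sum => u /andP [_]; rewrite -ltnNge => /ltnW.
  by rewrite -sum_nat_const [leqRHS](bigID (fun u => m <= 2 * K * g u)) /= leq_addl.
rewrite (bigID (fun u => m <= 2 * K * g u)) /= in dense.
have : m * #|U| <= m * (2 * K * #|U2|) by nia.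
by rewrite leq_pmul2l.
Qed.

(* Most of the density comes from the u whose fibre has at least |X|/2K elements; among
   those, pigeonhole over the at most 2^|X| possible fibres. *)
Lemma dense_rectangle (T1 T2 : finType) (X : {set T1}) (U : {set T2}) (Rel : {set T1 * T2}) K :
  0 < K -> Rel \subset setX X U -> #|X| * #|U| <= K * #|Rel| ->
  exists (X' : {set T1}) (U' : {set T2}), [/\ X' \subset X, U' \subset U,
    #|X| <= 2 * K * #|X'|, #|U| <= 2 * K * 2 ^ #|X| * #|U'| & setX X' U' \subset Rel].
Proof.
move=> K_gt0 RelXU dense.
have [X0|X_gt0] := posnP #|X|.
  exists set0, U; rewrite X0 expn0 sub0set; split=> //; first by nia.
  by apply/subsetP => -[x u]; rewrite in_setX inE.
have [U0|U_gt0] := posnP #|U|.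
  exists X, set0; rewrite U0 sub0set; split=> //; first by nia.
  by apply/subsetP => -[x u]; rewrite in_setX inE andbF.
pose fiber u := [set x | (x, u) \in Rel].
have fiberX u : fiber u \subset X.
  by apply/subsetP => x; rewrite inE => /(subsetP RelXU) /setXP [].
have RelU : {in Rel, forall p : T1 * T2, p.2 \in U}.
  by move=> p /(subsetP RelXU); case: p => x u /setXP [].
rewrite (card_rel_sum_fibers RelU) in dense.
have := card_large_values X_gt0 (fun u _ => subset_leq_card (fiberX u)) dense.
set U2 := [set u in U | _] => U_U2.
have U2_0 : U2 != set0 by rewrite -card_gt0; nia.
have [X'] := pigeonhole_fiber U2_0 (B := powerset X) (fun u _ => etrans (powersetE _ _) (fiberX u)).
rewrite powersetE card_powerset; set U' := [set u in U2 | _] => X'X U2_U'.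
have [u0 U'u0] : exists u0, u0 \in U' by apply/set0Pn; rewrite -card_gt0; nia.
have /setIdP [/setIdP [Uu0 large] /eqP fiber_u0] := U'u0.
exists X', U'; split=> //.
- by apply/subsetP => u /setIdP [/setIdP []].
- by rewrite -fiber_u0.
- by nia.
apply/subsetP => -[x u] /setXP [X'x /setIdP [_ /eqP fiber_u]].
by move: X'x; rewrite -fiber_u inE.
Qed.

Lemma double_count (T1 T2 : finType) (A : {set T1}) (B : {set T2}) (R : T1 -> T2 -> bool) :
  \sum_(a in A) #|[set b in B | R a b]| = \sum_(b in B) #|[set a in A | R a b]|.
Proof.
have card_filter (T : finType) (X : {set T}) (P : pred T) :
    #|[set x in X | P x]| = \sum_(x in X) P x.
  by rewrite -sum1dep_card big_mkcondr; apply: eq_bigr => x _; case: (P x).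
under eq_bigr => a _ do rewrite card_filter.
by rewrite exchange_big; apply: eq_bigr => b _; rewrite card_filter.
Qed.

Lemma exists_popular_point (T V : finType) (Box : {set T}) (Vs : {set V})
    (Wt : T -> {set V}) K :
  Vs != set0 -> {in Box, forall t, Wt t \subset Vs /\ #|Vs| <= K * #|Wt t|} ->
  exists2 v, v \in Vs & #|Box| <= K * #|[set t in Box | v \in Wt t]|.
Proof.
move=> Vs0 dense.
have [v Vs_v vmax] := sum_le_card_mul_max (fun v => #|[set t in Box | v \in Wt t]|) Vs0.
exists v => //; rewrite -(@leq_pmul2l #|Vs|) ?card_gt0 // mulnCA.
apply: leq_trans (leq_mul (leqnn K) vmax).
have -> : #|Vs| * #|Box| = \sum_(t in Box) #|Vs| by rewrite sum_nat_const mulnC.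
rewrite double_count big_distrr /=; apply: leq_sum => t Box_t.
have [WVs dense_t] := dense t Box_t.
suff -> : [set v in Vs | v \in Wt t] = Wt t by [].
by apply/setP => x; rewrite inE; apply/andb_idl => /(subsetP WVs).
Qed.

(* [sA] elements of A suffice for the first rectangle step, which leaves a relation of
   density 1/K2 on B x C; then [sB] elements of B suffice for the second one. *)
Definition box_size K n :=
  let sA := 2 * K * n in let K2 := 2 * K * 2 ^ sA in let sB := 2 * K2 * n in
  2 * K2 * 2 ^ sB * n.

Lemma dense_box (T1 T2 T3 V : finType) (A : {set T1}) (B : {set T2}) (C : {set T3})
    (Vs : {set V}) (Wt : T1 -> T2 -> T3 -> {set V}) K n :
  0 < K -> Vs != set0 ->
  (forall a b c, a \in A -> b \in B -> c \in C ->
     Wt a b c \subset Vs /\ #|Vs| <= K * #|Wt a b c|) ->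
  box_size K n <= #|A| -> box_size K n <= #|B| -> box_size K n <= #|C| ->
  exists v (A' : {set T1}) (B' : {set T2}) (C' : {set T3}),
    [/\ A' \subset A, B' \subset B, C' \subset C & v \in Vs] /\
    [/\ n <= #|A'|, n <= #|B'|, n <= #|C'| &
        forall a b c, a \in A' -> b \in B' -> c \in C' -> v \in Wt a b c].
Proof.
move=> K_gt0 Vs0 dense; rewrite /box_size.
set sA := 2 * K * n; set K2 := 2 * K * 2 ^ sA; set sB := 2 * K2 * n => A_big B_big C_big.
have K2_gt0 : 0 < K2 by rewrite !muln_gt0 K_gt0 expn_gt0.
have sB_le : sB <= 2 * K2 * 2 ^ sB * n by have := expn_gt0 2 sB; nia.
have sA_le : sA <= sB by have := expn_gt0 2 sA; rewrite /sB /K2; nia.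
have [A0 A0A cardA0] := exists_subset_card (leq_trans sA_le (leq_trans sB_le A_big)).
have [B0 B0B cardB0] := exists_subset_card (leq_trans sB_le B_big).
pose Box := setX A0 (setX B0 C).
have [|v Vs_v popular] := exists_popular_point (Box := Box)
    (Wt := fun t => Wt t.1 t.2.1 t.2.2) (K := K) Vs0.
  move=> [a [b c]] /setXP [A0a /setXP [B0b Cc]].
  by apply: dense => //; [exact: (subsetP A0A) | exact: (subsetP B0B)].
pose Rel := [set t in Box | v \in Wt t.1 t.2.1 t.2.2].
have Rel_sub : Rel \subset Box by apply/subsetP => t /setIdP [].
have Rel_dense : #|A0| * #|setX B0 C| <= K * #|Rel| by rewrite -cardsX.
have [A' [BC [A'A0 BC_sub A0_A' BC_card A'BC_Rel]]] := dense_rectangle K_gt0 Rel_sub Rel_dense.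
have [|B' [C' [B'B0 C'C B0_B' C_C' B'C'_BC]]] := dense_rectangle K2_gt0 BC_sub.
  by rewrite -cardsX /K2 -cardA0.
exists v, A', B', C'; split.
  by split=> //; [exact: subset_trans A'A0 A0A | exact: subset_trans B'B0 B0B].
split.
- have := leq_trans (eq_leq (esym cardA0)) A0_A'.
  by rewrite leq_pmul2l // muln_gt0.
- have := leq_trans (eq_leq (esym cardB0)) B0_B'.
  by rewrite leq_pmul2l // muln_gt0.
- have := leq_trans C_big C_C'; rewrite cardB0.
  by rewrite leq_pmul2l // !muln_gt0 K_gt0 !expn_gt0.
move=> a b c A'a B'b C'c.
have BCbc : (b, c) \in BC by apply: (subsetP B'C'_BC); rewrite in_setX B'b C'c.
have : (a, (b, c)) \in Rel by apply: (subsetP A'BC_Rel); rewrite in_setX A'a BCbc.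
by case/setIdP.
Qed.

Section Rank.
Variable N : nat.
Implicit Types (S H L R : {set 'I_N}) (i k x : 'I_N).

Definition rank_in S i := #|[set x in S | x < i]|.

Section SplitAt.
Variables (L R : {set 'I_N}) (i : 'I_N).
Hypotheses (L_lt : {in L, forall x : 'I_N, x < i}) (R_gt : {in R, forall x : 'I_N, i < x}).

Lemma mem_split_lt x : x \in L :|: (i |: R) -> x < i -> x \in L.
Proof.
case/setUP => [//|/setU1P [-> | /R_gt ix] xi]; first by rewrite ltnn in xi.
by have := ltn_trans ix xi; rewrite ltnn.
Qed.

Lemma mem_split_gt x : x \in L :|: (i |: R) -> i < x -> x \in R.
Proof.
case/setUP => [/L_lt xi|/setU1P [-> | //]] ix; last by rewrite ltnn in ix.
by have := ltn_trans ix xi; rewrite ltnn.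
Qed.

Lemma card_split : #|L :|: (i |: R)| = #|L| + 1 + #|R|.
Proof.
have iR : i \notin R by apply/negP => /R_gt; rewrite ltnn.
have LiR : L :&: (i |: R) = set0.
  apply/setP => x; rewrite !inE; apply/negbTE/andP => -[/L_lt xi /predU1P [xi'|/R_gt ix]].
    by rewrite xi' ltnn in xi.
  by have := ltn_trans ix xi; rewrite ltnn.
by rewrite cardsU LiR cards0 subn0 cardsU1 iR addnA.
Qed.

Lemma rank_in_split : rank_in (L :|: (i |: R)) i = #|L|.
Proof.
apply: eq_card => x; rewrite inE; apply/andP/idP => [[]|Lx]; first exact: mem_split_lt.
by rewrite inE Lx L_lt.
Qed.

End SplitAt.

Lemma split_at H i : i \in H -> H = [set x in H | x < i] :|: (i |: [set x in H | i < x]).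
Proof.
move=> Hi; apply/setP => x; rewrite !inE.
case: (ltngtP x i) => [xi|ix|/val_inj ->]; rewrite ?Hi ?eqxx ?orbT //=.
  by rewrite -val_eqE (ltn_eqF xi) andbT andbF !orbF.
by rewrite -val_eqE (gtn_eqF ix) andbT andbF.
Qed.

Lemma card_rank_split H i : i \in H -> #|H| = rank_in H i + 1 + #|[set x in H | i < x]|.
Proof. by move=> Hi; rewrite {1}(split_at Hi) card_split // => x /setIdP []. Qed.

Lemma rank_in_ltn S i k : i \in S -> i < k -> rank_in S i < rank_in S k.
Proof.
move=> Si ik; apply: proper_card; apply/properP; split.
  by apply/subsetP => x /setIdP [Sx xi]; rewrite inE Sx (ltn_trans xi).
by exists i; rewrite !inE ?Si ?ik ?ltnn.
Qed.

Lemma rank_in_inj S : {in S &, injective (rank_in S)}.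
Proof.
move=> i k Si Sk eq_rank; apply/val_inj; case: (ltngtP i k) => // [ik|ki].
  by have := rank_in_ltn Si ik; rewrite eq_rank ltnn.
by have := rank_in_ltn Sk ki; rewrite eq_rank ltnn.
Qed.

Lemma rank_in_lt_card S i : i \in S -> rank_in S i < #|S|.
Proof. by move=> Si; rewrite [ltnRHS](card_rank_split Si); lia. Qed.

Lemma exists_rank_in H a : a < #|H| -> exists2 i, i \in H & rank_in H i = a.
Proof.
elim: a H => [|a IHa] H aH; have /ord_set_min [y Hy ymin] : H != set0
  by rewrite -card_gt0; lia.
- exists y => //; apply: eq_card0 => x; rewrite !inE; apply/andP => -[Hx].
  by rewrite ltnNge ymin.
- have [|i /setD1P [iy Hi] rank_i] := IHa (H :\ y); first by rewrite (cardsD1 y) Hy in aH.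
  have yi : y < i by rewrite ltn_neqAle ymin // andbT; apply: contra iy => /eqP/val_inj ->.
  exists i => //; rewrite /rank_in (cardsD1 y) !inE Hy yi -rank_i add1n; congr _.+1.
  by apply: eq_card => x; rewrite !inE andbA.
Qed.

Lemma exists_two_point_subset (L M R : {set 'I_N}) i k a b c :
  i < k -> {in L, forall x : 'I_N, x < i} -> {in M, forall x : 'I_N, i < x < k} ->
  {in R, forall x : 'I_N, k < x} -> a <= #|L| -> b <= #|M| -> c <= #|R| ->
  exists S, [/\ S \subset L :|: (i |: (M :|: (k |: R))), #|S| = a + b + c + 2,
                i \in S & k \in S] /\ rank_in S i = a /\ rank_in S k = a + 1 + b.
Proof.
move=> ik L_lt M_btw R_gt /exists_subset_card [L0 L0L <-] /exists_subset_card [M0 M0M <-].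
move=> /exists_subset_card [R0 R0R <-].
have L0_lt : {in L0, forall x : 'I_N, x < i} by move=> x /(subsetP L0L) /L_lt.
have M0_gt : {in M0, forall x : 'I_N, i < x} by move=> x /(subsetP M0M) /M_btw /andP [].
have M0_lt : {in M0, forall x : 'I_N, x < k} by move=> x /(subsetP M0M) /M_btw /andP [].
have R0_gt : {in R0, forall x : 'I_N, k < x} by move=> x /(subsetP R0R) /R_gt.
have MR_gt : {in M0 :|: (k |: R0), forall x : 'I_N, i < x}.
  by move=> x /setUP [/M0_gt //|/setU1P [-> //|/R0_gt /(ltn_trans ik)]].
have LM_lt : {in L0 :|: (i |: M0), forall x : 'I_N, x < k}.
  by move=> x /setUP [/L0_lt /ltn_trans/(_ ik) //|/setU1P [-> //|/M0_lt]].
exists (L0 :|: (i |: (M0 :|: (k |: R0)))); split; last split.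
- split; rewrite ?(card_split L0_lt MR_gt) ?(card_split M0_lt R0_gt) ?inE ?eqxx ?orbT //.
    by rewrite !setUSS ?setUS.
  lia.
- exact: rank_in_split.
have -> : L0 :|: (i |: (M0 :|: (k |: R0))) = (L0 :|: (i |: M0)) :|: (k |: R0).
  by rewrite !setUA.
by rewrite (rank_in_split LM_lt R0_gt) card_split.
Qed.

End Rank.

Lemma exists_nat_density_bound (R : archiRealFieldType) (delta : R) : (0 < delta)%R ->
  exists2 K : nat, 0 < K & forall a b : nat, (delta * a%:R <= b%:R)%R -> a <= K * b.
Proof.
move=> delta_gt0; have inv_ge0 : (0 <= delta^-1)%R by rewrite invr_ge0 ltW.
have := archi_boundP inv_ge0; set K := Num.bound _ => K_gt.
have K_delta : (1 <= K%:R * delta)%R.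
  by move: K_gt; rewrite -(ltr_pM2r delta_gt0) mulVf ?gt_eqF // => /ltW.
exists K.
  by rewrite lt0n; apply: contraTneq K_delta => ->; rewrite mul0r ler10.
move=> a b dense_ab; rewrite -(ler_nat R) natrM.
have a_ge0 : (0 <= a%:R :> R)%R by [].
have K_ge0 : (0 <= K%:R :> R)%R by [].
nra.
Qed.

Section GoodPairs.
Variables (N : nat) (V : finType) (part : V -> 'I_N * 'I_N)
  (W : 'I_N -> 'I_N -> 'I_N -> 'I_N -> 'I_N -> {set V}).
Implicit Types (S H : {set 'I_N}) (i k : 'I_N) (v : V).

Definition good_vertex S i k v :=
  (v \in Vpart part i k) && [forall j in S, forall j' in S, forall j'' in S,
    [&& j < i, i < j', j' < k & k < j''] ==> (v \in W j i j' k j'')].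

Definition good_pair S i k := [exists v, good_vertex S i k v].

Definition bad_rank_pairs n S : {set 'I_n * 'I_n} :=
  [set p : 'I_n * 'I_n | [exists i in S, exists k in S,
    [&& rank_in S i == p.1, rank_in S k == p.2, i < k & ~~ good_pair S i k]]].

Lemma good_vertexP S i k v :
  reflect (v \in Vpart part i k /\
           forall j j' j'', j \in S -> j' \in S -> j'' \in S ->
             [&& j < i, i < j', j' < k & k < j''] -> v \in W j i j' k j'')
          (good_vertex S i k v).
Proof.
apply: (iffP andP) => -[v_ik v_W]; split=> //.
  move=> j j' j'' Sj Sj' Sj'' chain.
  by move: v_W => /forall_inP/(_ j Sj)/forall_inP/(_ j' Sj')/forall_inP/(_ j'' Sj'')/implyP; apply.
apply/forall_inP => j Sj; apply/forall_inP => j' Sj'; apply/forall_inP => j'' Sj''.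
by apply/implyP; exact: v_W.
Qed.

Lemma good_vertex_subset S S' i k v :
  S \subset S' -> good_vertex S' i k v -> good_vertex S i k v.
Proof.
move=> SS' /good_vertexP [v_ik v_W]; apply/good_vertexP; split=> // j j' j'' Sj Sj' Sj''.
by apply: v_W; exact: (subsetP SS').
Qed.

Lemma bad_rank_pairs_lt n S (p : 'I_n * 'I_n) : p \in bad_rank_pairs n S -> p.1 < p.2.
Proof.
rewrite inE => /exists_inP [i Si /exists_inP [k Sk /and4P [/eqP <- /eqP <- ik _]]].
exact: rank_in_ltn.
Qed.

Lemma good_pair_not_bad n S i k (p : 'I_n * 'I_n) :
  i \in S -> k \in S -> rank_in S i = p.1 -> rank_in S k = p.2 -> good_pair S i k ->
  p \notin bad_rank_pairs n S.
Proof.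
move=> Si Sk rank_i rank_k good_ik.
rewrite inE; apply/exists_inP => -[i' Si' /exists_inP [k' Sk' /and4P [/eqP ri' /eqP rk' _]]].
have -> : i' = i by apply: (rank_in_inj Si' Si); rewrite ri' rank_i.
have -> : k' = k by apply: (rank_in_inj Sk' Sk); rewrite rk' rank_k.
by rewrite good_ik.
Qed.

Lemma good_pair_of_no_bad n S i k :
  #|S| = n -> bad_rank_pairs n S = set0 -> i \in S -> k \in S -> i < k -> good_pair S i k.
Proof.
move=> S_n no_bad Si Sk ik; apply: contraT => bad_ik.
have rank_lt x : x \in S -> rank_in S x < n by rewrite -S_n; exact: rank_in_lt_card.
pose p := (Ordinal (rank_lt i Si), Ordinal (rank_lt k Sk)).
have : p \in bad_rank_pairs n S.
  by rewrite inE; apply/exists_inP; exists i => //; apply/exists_inP; exists k; rewrite ?eqxx ?ik.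
by rewrite no_bad inE.
Qed.

Lemma exists_good_witnesses n S (v0 : V) : #|S| = n -> bad_rank_pairs n S = set0 ->
  exists w : 'I_N -> 'I_N -> V,
    forall i k, i \in S -> k \in S -> i < k -> good_vertex S i k (w i k).
Proof.
move=> S_n no_bad; exists (fun i k => odflt v0 [pick v | good_vertex S i k v]).
move=> i k Si Sk ik; case: pickP => [v //|no_v].
by have /existsP [v] := good_pair_of_no_bad S_n no_bad Si Sk ik; rewrite no_v.
Qed.

Variable K : nat.
Hypothesis K_gt0 : 0 < K.
Hypothesis parts_nonempty : forall i k, i < k -> exists v, v \in Vpart part i k.
Hypothesis W_dense : forall j i j' k j'' : 'I_N, [&& j < i, i < j', j' < k & k < j''] ->
  W j i j' k j'' \subset Vpart part i k /\ #|Vpart part i k| <= K * #|W j i j' k j''|.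

Lemma exists_good_pair_at_ranks n H r1 r2 :
  r1 < r2 < n -> 3 * box_size K n + 2 <= #|H| ->
  exists S i k, [/\ S \subset H, #|S| = n, i \in S & k \in S] /\
                [/\ rank_in S i = r1, rank_in S k = r2 & good_pair S i k].
Proof.
move=> /andP [r12 r2n]; set s := box_size K n => H_big.
have [a_n b_n c_n] : [/\ r1 <= n, r2 - r1 - 1 <= n & n - r2 - 1 <= n] by split; lia.
have card_n : r1 + (r2 - r1 - 1) + (n - r2 - 1) + 2 = n by lia.
have rank_r2 : r1 + 1 + (r2 - r1 - 1) = r2 by lia.
have [|i Hi rank_i] := exists_rank_in (H := H) (a := s); first by lia.
set H' := [set x in H | i < x].
have H'_card : #|H| = s + 1 + #|H'| by rewrite [LHS](card_rank_split Hi) rank_i.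
have [|k H'k rank_k] := exists_rank_in (H := H') (a := s); first by lia.
have /setIdP [Hk ik] := H'k.
set A := [set x in H | x < i]; set B := [set x in H' | x < k]; set C := [set x in H' | k < x].
have C_card : #|H'| = s + 1 + #|C| by rewrite [LHS](card_rank_split H'k) rank_k.
have Vs0 : Vpart part i k != set0 by apply/set0Pn; exact: parts_nonempty.
have box_dense a b c : a \in A -> b \in B -> c \in C ->
    W a i b k c \subset Vpart part i k /\ #|Vpart part i k| <= K * #|W a i b k c|.
  move=> /setIdP [_ ai] /setIdP [/setIdP [_ ib] bk] /setIdP [_ kc].
  by apply: W_dense; rewrite ai ib bk kc.
have A_big : s <= #|A| by rewrite [#|A|]rank_i.
have B_big : s <= #|B| by rewrite [#|B|]rank_k.
have C_big : s <= #|C| by lia.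
have [v [A' [B' [C' [[A'A B'B C'C v_ik] [A'n B'n C'n v_W]]]]]] :=
  dense_box (A := A) (B := B) (C := C) (Wt := fun a b c => W a i b k c)
    K_gt0 Vs0 box_dense A_big B_big C_big.
have A'_lt : {in A', forall x : 'I_N, x < i} by move=> x /(subsetP A'A) /setIdP [].
have B'_btw : {in B', forall x : 'I_N, i < x < k}.
  by move=> x /(subsetP B'B) /setIdP [/setIdP [_ ->]].
have B'_lt : {in B', forall x : 'I_N, x < k} by move=> x /B'_btw /andP [].
have C'_gt : {in C', forall x : 'I_N, k < x} by move=> x /(subsetP C'C) /setIdP [].
have BC'_gt : {in B' :|: (k |: C'), forall x : 'I_N, i < x}.
  by move=> x /setUP [/B'_btw /andP [] //|/setU1P [-> //|/C'_gt /(ltn_trans ik)]].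
have good_full : good_vertex (A' :|: (i |: (B' :|: (k |: C')))) i k v.
  apply/good_vertexP; split=> // j j' j'' Sj Sj' Sj'' /and4P [ji ij' j'k kj''].
  have BCj' := mem_split_gt A'_lt Sj' ij'.
  have BCj'' := mem_split_gt A'_lt Sj'' (ltn_trans ij' (ltn_trans j'k kj'')).
  apply: v_W; first exact: (mem_split_lt (L := A') BC'_gt Sj ji).
    exact: (mem_split_lt (L := B') C'_gt BCj' j'k).
  exact: (mem_split_gt (R := C') B'_lt BCj'' kj'').
have [S [[S_sub S_card Si Sk] [rank_Si rank_Sk]]] := exists_two_point_subset
  ik A'_lt B'_btw C'_gt
  (leq_trans a_n A'n) (leq_trans b_n B'n) (leq_trans c_n C'n).
exists S, i, k; split; split; rewrite ?S_card ?rank_Sk //.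
- have H'H : H' \subset H by apply/subsetP => x /setIdP [].
  have A'H : A' \subset H by apply: (subset_trans A'A); apply/subsetP => x /setIdP [].
  have B'H : B' \subset H.
    by apply: (subset_trans B'B); apply/subsetP => x /setIdP [/(subsetP H'H)].
  have C'H : C' \subset H.
    by apply: (subset_trans C'C); apply/subsetP => x /setIdP [/(subsetP H'H)].
  by apply: subset_trans S_sub _; rewrite !subUset !sub1set Hi Hk A'H B'H C'H.
- by apply/existsP; exists v; exact: good_vertex_subset S_sub good_full.
Qed.

Lemma homogeneous_bad_rank_pairs_eq0 n H c S :
  3 * box_size K n + 2 <= #|H| -> homogeneous (bad_rank_pairs n) n H c ->
  S \subset H -> #|S| = n -> bad_rank_pairs n S = set0.
Proof.
move=> H_big H_mono SH S_n; apply/setP => p; rewrite in_set0; apply/negbTE/negP => bad_p.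
have p_lt : p.1 < p.2 < n by rewrite (bad_rank_pairs_lt bad_p) ltn_ord.
have [S' [i [k [[S'H S'_n Si Sk] [rank_i rank_k good_ik]]]]] :=
  exists_good_pair_at_ranks p_lt H_big.
have := good_pair_not_bad Si Sk rank_i rank_k good_ik.
by rewrite (H_mono S' S'H S'_n) -(H_mono S SH S_n) bad_p.
Qed.

End GoodPairs.

Unset Implicit Arguments.

Theorem lemma4p2 (R : realType) (delta : R) (n : nat) :
  (0 < delta)%R ->
  exists N : nat,
    forall (V : finType) (part : V -> 'I_N * 'I_N) (E : {set {set V}}),
      is_npartitioned part E ->
      forall W : 'I_N -> 'I_N -> 'I_N -> 'I_N -> 'I_N -> {set V},
        (forall j i j' k j'' : 'I_N,
            [&& (j < i)%N, (i < j')%N, (j' < k)%N & (k < j'')%N] ->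
            W j i j' k j'' \subset Vpart part i k /\
            (delta * (#|Vpart part i k|)%:R <= (#|W j i j' k j''|)%:R)%R) ->
        exists (I : {set 'I_N}) (w : 'I_N -> 'I_N -> V),
          #|I| = n /\
          (forall i k : 'I_N, i \in I -> k \in I -> (i < k)%N ->
              w i k \in Vpart part i k) /\
          (forall j i j' k j'' : 'I_N,
              j \in I -> i \in I -> j' \in I -> k \in I -> j'' \in I ->
              [&& (j < i)%N, (i < j')%N, (j' < k)%N & (k < j'')%N] ->
              w i k \in W j i j' k j'').
Proof.
move=> delta_gt0; have [K K_gt0 density] := exists_nat_density_bound delta_gt0.
have [N0 ramseyN0] := ramsey {set 'I_n * 'I_n} n (n + (3 * box_size K n + 2)).
(* [N0.+2 >= 2] makes [V] nonempty, which provides a default value for [w]. *)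
exists N0.+2 => V part E [_ [parts_nonempty _]] W W_delta.
have W_dense (j i j' k j'' : 'I_N0.+2) : [&& (j < i)%N, (i < j')%N, (j' < k)%N & (k < j'')%N] ->
    W j i j' k j'' \subset Vpart part i k /\ (#|Vpart part i k| <= K * #|W j i j' k j''|)%N.
  by move=> /W_delta [sub dense]; split; last exact: density.
have [v0 _] := parts_nonempty ord0 (@Ordinal N0.+2 1 isT) isT.
have [|H [c [_ H_big H_mono]]] := ramseyN0 N0.+2 setT (bad_rank_pairs part W n).
  by rewrite cardsT card_ord; lia.
have [S SH S_n] := exists_subset_card (leq_trans (leq_addr _ _) H_big).
have H_big' : 3 * box_size K n + 2 <= #|H| by apply: leq_trans H_big; exact: leq_addl.
have no_bad := homogeneous_bad_rank_pairs_eq0 K_gt0 parts_nonempty W_dense H_big' H_mono SH S_n.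
have [w w_good] := exists_good_witnesses v0 S_n no_bad.
exists S, w; split=> //; split=> [i k Si Sk ik | j i j' k j'' Sj Si Sj' Sk Sj'' chain].
  by have /good_vertexP [] := w_good i k Si Sk ik.
have ik : (i < k)%N by case/and4P: chain => _ ij' j'k _; exact: ltn_trans ij' j'k.
by have /good_vertexP [_] := w_good i k Si Sk ik; apply.
Qed.
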